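(* Let $A=\mathbb C_w[x,x^{-1},y,y^{-1}]$. For each of the following six choices of elements $x',y'\in A$ and $w'(s,t)\in A$ ($s,t\in\mathbb Z$): (1) $x'=y$, $y'=x$, $w'(s,t)=w(t,s)^{-1}$; (2) $x'=x^{-1}$, $y'=y$, $w'(s,t)=w(1-s,t)^{-1}$; (3) $x'=x^{-1}$, $y'=x^{-1}y$, $w'(s,t)=w(1-s-t,t)^{-1}$; (4) $x'=x$, $y'=y^{-1}$, $w'(s,t)=w(s,1-t)^{-1}$; (5) $x'=x^{-1}$, $y'=y^{-1}$, $w'(s,t)=w(1-s,1-t)$; (6) $x'=y^{-1}x$, $y'=y^{-1}$, $w'(s,t)=w(s,1-s-t)^{-1}$; the elements $x',y',w'(s,t)$ satisfy the defining relations of $A$ with $(x,y,w)$ replaced by $(x',y',w')$, and the assignment $x\mapsto x'$, $y\mapsto y'$, $w(s,t)\mapsto w'(s,t)$ defines an involutive algebra isomorphism.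
   Context: Let $(w(s,t))_{s,t\in\mathbb Z}$ be commuting invertible variables. $\mathbb C_w[x,x^{-1},y,y^{-1}]$ is the associative unital $\mathbb C$-algebra generated by $x,x^{-1},y,y^{-1}$ and the $w(s,t)^{\pm1}$ subject to $x^{-1}x=xx^{-1}=1$, $y^{-1}y=yy^{-1}=1$, $yx=w(1,1)xy$, $x\,w(s,t)=w(s+1,t)\,x$, $y\,w(s,t)=w(s,t+1)\,y$ for all $s,t\in\mathbb Z$. *)

From mathcomp Require Import all_boot all_algebra.
From mathcomp Require Import Rstruct complex.
From Stdlib Require Import Reals.
Set Implicit Arguments. Unset Strict Implicit. Unset Printing Implicit Defensive.
Import GRing.Theory.
Local Open Scope ring_scope.

Definition CC : fieldType := Rdefinitions.R[i].

Definition is_alg_hom (A B : algType CC) (f : A -> B) : Prop :=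
  [/\ forall u v, f (u + v) = f u + f v,
      forall (a : CC) u, f (a *: u) = a *: f u,
      forall u v, f (u * v) = f u * f v &
      f 1 = 1].

(* The defining relations of C_w[x,x^-1,y,y^-1], for data
   x, xi (= x^-1), y, yi (= y^-1), w s t, wi s t (= w(s,t)^-1) in B. *)
Definition qrels (B : algType CC) (x xi y yi : B) (w wi : int -> int -> B) : Prop :=
  (xi * x = 1 /\ x * xi = 1) /\
  (yi * y = 1 /\ y * yi = 1) /\
  (forall s t, w s t * wi s t = 1 /\ wi s t * w s t = 1) /\
  (forall s t s' t', w s t * w s' t' = w s' t' * w s t) /\
  y * x = w 1 1 * x * y /\
  (forall s t, x * w s t = w (s + 1) t * x) /\
  (forall s t, y * w s t = w s (t + 1) * y).

(* A (with distinguished elements) is the C-algebra presented by the above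
   generators and relations: the relations hold in A, and A has the universal
   property of the presentation. *)
Definition is_Cw_Laurent (A : algType CC) (x xi y yi : A) (w wi : int -> int -> A) : Prop :=
  qrels x xi y yi w wi /\
  forall (B : algType CC) (X XI Y YI : B) (W WI : int -> int -> B),
    qrels X XI Y YI W WI ->
    (exists f : A -> B, is_alg_hom f /\
       f x = X /\ f xi = XI /\ f y = Y /\ f yi = YI /\
       (forall s t, f (w s t) = W s t) /\ (forall s t, f (wi s t) = WI s t)) /\
    (forall f g : A -> B, is_alg_hom f -> is_alg_hom g ->
       f x = g x -> f xi = g xi -> f y = g y -> f yi = g yi ->
       (forall s t, f (w s t) = g (w s t)) -> (forall s t, f (wi s t) = g (wi s t)) ->
       forall a, f a = g a).

Definition defines_involution (A : algType CC) (x y : A) (w : int -> int -> A)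
    (x' xi' y' yi' : A) (w' wi' : int -> int -> A) : Prop :=
  qrels x' xi' y' yi' w' wi' /\
  exists f : A -> A,
    is_alg_hom f /\ f x = x' /\ f y = y' /\ (forall s t, f (w s t) = w' s t) /\
    bijective f /\ (forall a, f (f a) = a).

(* Each of the six families satisfies the defining relations of A: this is a
   direct computation from the relations and their consequences for the
   inverses x^-1, y^-1, w(s,t)^-1.  The universal property of the presentation
   then yields an endomorphism f of A sending (x, y, w) to (x', y', w').  One
   checks that f also sends (x', y', w') back to (x, y, w), so f \o f agrees
   with the identity on the generators and is the identity by the uniqueness
   part of the universal property; hence f is a bijective involution. *)
From mathcomp Require Import all_boot all_algebra.
From mathcomp Require Import ring.
Set Implicit Arguments. Unset Strict Implicit. Unset Printing Implicit Defensive.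
Import GRing.Theory.
Local Open Scope ring_scope.

Definition inverse_pair (R : pzRingType) (u v : R) := u * v = 1 /\ v * u = 1.

Section InversePairs.
Variable R : pzRingType.
Implicit Types a ai u ui v vi : R.

Lemma inverse_pair_sym u v : inverse_pair u v -> inverse_pair v u.
Proof. by case. Qed.

Lemma inverse_pair_mul u ui v vi :
  inverse_pair u ui -> inverse_pair v vi -> inverse_pair (u * v) (vi * ui).
Proof.
move=> [uui uiu] [vvi viv]; split.
- by rewrite mulrA -(mulrA u) vvi mulr1.
- by rewrite mulrA -(mulrA vi) uiu mulr1.
Qed.

Lemma commr_inverse u v vi : inverse_pair v vi -> u * v = v * u -> u * vi = vi * u.
Proof.
move=> [vvi viv] uv.
by rewrite -[u * vi]mul1r -viv -mulrA (mulrA v) -uv !mulrA -(mulrA _ v) vvi mulr1.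
Qed.

Lemma conjr_inverse a u ui (u' ui' : R) :
  inverse_pair u ui -> inverse_pair u' ui' -> a * u = u' * a -> a * ui = ui' * a.
Proof.
move=> [uui _] [_ uiu'] au.
by rewrite -[a * ui]mul1r -uiu' -mulrA (mulrA u') -au -!mulrA uui mulr1.
Qed.

Lemma conjr_by_inverse a ai u (u' : R) :
  inverse_pair a ai -> a * u = u' * a -> ai * u' = u * ai.
Proof.
move=> [aai aia] au.
by rewrite -[ai * u']mulr1 -aai !mulrA -(mulrA ai u' a) -au !mulrA aia mul1r.
Qed.

End InversePairs.

Section Relations.
Variables (A : algType CC) (x xi y yi : A) (w wi : int -> int -> A).
Hypothesis rels : qrels x xi y yi w wi.

Let x_inv : inverse_pair xi x := rels.1.
Let y_inv : inverse_pair yi y := rels.2.1.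
Let w_inv s t : inverse_pair (w s t) (wi s t) := rels.2.2.1 s t.
Let w_comm := rels.2.2.2.1.
Let y_x := rels.2.2.2.2.1.
Let x_w := rels.2.2.2.2.2.1.
Let y_w := rels.2.2.2.2.2.2.

Lemma w_wi_comm a b c d : w a b * wi c d = wi c d * w a b.
Proof. exact: commr_inverse (w_inv c d) (w_comm a b c d). Qed.

Lemma wi_comm a b c d : wi a b * wi c d = wi c d * wi a b.
Proof. by apply: commr_inverse (w_inv c d) _; rewrite w_wi_comm. Qed.

Lemma x_wi s t : x * wi s t = wi (s + 1) t * x.
Proof. exact: conjr_inverse (w_inv _ _) (w_inv _ _) (x_w _ _). Qed.

Lemma y_wi s t : y * wi s t = wi s (t + 1) * y.
Proof. exact: conjr_inverse (w_inv _ _) (w_inv _ _) (y_w _ _). Qed.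

Lemma xi_w s t : xi * w s t = w (s - 1) t * xi.
Proof. by apply: conjr_by_inverse (inverse_pair_sym x_inv) _; rewrite x_w subrK. Qed.

Lemma xi_wi s t : xi * wi s t = wi (s - 1) t * xi.
Proof. by apply: conjr_by_inverse (inverse_pair_sym x_inv) _; rewrite x_wi subrK. Qed.

Lemma yi_w s t : yi * w s t = w s (t - 1) * yi.
Proof. by apply: conjr_by_inverse (inverse_pair_sym y_inv) _; rewrite y_w subrK. Qed.

Lemma yi_wi s t : yi * wi s t = wi s (t - 1) * yi.
Proof. by apply: conjr_by_inverse (inverse_pair_sym y_inv) _; rewrite y_wi subrK. Qed.

Lemma x_y : x * y = wi 1 1 * y * x.
Proof. by rewrite -mulrA y_x !mulrA (w_inv 1 1).2 mul1r. Qed.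

Lemma y_xi : y * xi = wi 0 1 * xi * y.
Proof.
have -> : y * xi = xi * (wi 1 1 * y).
  by rewrite (conjr_by_inverse (inverse_pair_sym x_inv) x_y).
by rewrite mulrA xi_wi subrr.
Qed.

Lemma yi_x : yi * x = wi 1 0 * x * yi.
Proof.
rewrite -[yi * x]mulr1 -y_inv.2 !mulrA -(mulrA yi x y) x_y !mulrA yi_wi subrr.
by rewrite -(mulrA _ yi y) y_inv.1 mulr1.
Qed.

Lemma xi_y : xi * y = w 0 1 * y * xi.
Proof. by rewrite -mulrA y_xi !mulrA (w_inv 0 1).1 mul1r. Qed.

Lemma yi_xi : yi * xi = w 0 0 * xi * yi.
Proof.
rewrite -[yi * xi]mulr1 -y_inv.2 !mulrA -(mulrA yi xi y) xi_y !mulrA yi_w subrr.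
by rewrite -(mulrA _ yi y) y_inv.1 mulr1.
Qed.

Lemma qrels_swap_xy : qrels y yi x xi (fun s t => wi t s) (fun s t => w t s).
Proof.
split; first exact: y_inv.
split; first exact: x_inv.
split; first by move=> s t; apply: inverse_pair_sym.
split; first by move=> *; apply: wi_comm.
split; first exact: x_y.
by split=> s t; [exact: y_wi | exact: x_wi].
Qed.

Lemma qrels_inv_x : qrels xi x y yi (fun s t => wi (1 - s) t) (fun s t => w (1 - s) t).
Proof.
split; first exact: inverse_pair_sym.
split; first exact: y_inv.
split; first by move=> s t; apply: inverse_pair_sym.
split; first by move=> *; apply: wi_comm.
split; first by rewrite y_xi subrr.
split=> s t /=; last exact: y_wi.
by rewrite xi_wi; congr (wi _ _ * _); ring.
Qed.

Lemma qrels_inv_x_shear :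
  qrels xi x (xi * y) (yi * x) (fun s t => wi (1 - s - t) t) (fun s t => w (1 - s - t) t).
Proof.
split; first exact: inverse_pair_sym.
split; first exact: inverse_pair_mul y_inv (inverse_pair_sym x_inv).
split; first by move=> s t; apply: inverse_pair_sym.
split; first by move=> *; apply: wi_comm.
split; first by rewrite -mulrA y_xi !mulrA xi_wi subrr.
split=> s t /=.
- by rewrite xi_wi; congr (wi _ _ * _); ring.
- rewrite -mulrA y_wi mulrA xi_wi mulrA; congr (wi _ _ * _ * _); ring.
Qed.

Lemma qrels_inv_y : qrels x xi yi y (fun s t => wi s (1 - t)) (fun s t => w s (1 - t)).
Proof.
split; first exact: x_inv.
split; first exact: inverse_pair_sym.
split; first by move=> s t; apply: inverse_pair_sym.
split; first by move=> *; apply: wi_comm.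
split; first exact: yi_x.
split=> s t /=; first exact: x_wi.
by rewrite yi_wi; congr (wi _ _ * _); ring.
Qed.

Lemma qrels_inv_xy :
  qrels xi x yi y (fun s t => w (1 - s) (1 - t)) (fun s t => wi (1 - s) (1 - t)).
Proof.
split; first exact: inverse_pair_sym.
split; first exact: inverse_pair_sym.
split; first by move=> s t; apply: w_inv.
split; first by move=> *; apply: w_comm.
split; first by rewrite yi_xi !subrr.
split=> s t /=.
- by rewrite xi_w; congr (w _ _ * _); ring.
- by rewrite yi_w; congr (w _ _ * _); ring.
Qed.

Lemma qrels_inv_y_shear :
  qrels (yi * x) (xi * y) yi y (fun s t => wi s (1 - s - t)) (fun s t => w s (1 - s - t)).
Proof.
split; first exact: inverse_pair_mul x_inv (inverse_pair_sym y_inv).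
split; first exact: inverse_pair_sym.
split; first by move=> s t; apply: inverse_pair_sym.
split; first by move=> *; apply: wi_comm.
split.
  rewrite /= !mulrA -(mulrA yi yi x) yi_x !mulrA yi_wi.
  by congr (wi _ _ * _ * _ * _); ring.
split=> s t /=.
- rewrite -mulrA x_wi mulrA yi_wi mulrA; congr (wi _ _ * _ * _); ring.
- by rewrite yi_wi; congr (wi _ _ * _); ring.
Qed.

End Relations.

Lemma alg_hom_id (A : algType CC) : is_alg_hom (@id A).
Proof. by []. Qed.

Lemma alg_hom_comp (A B C : algType CC) (f : B -> C) (g : A -> B) :
  is_alg_hom f -> is_alg_hom g -> is_alg_hom (f \o g).
Proof.
case=> fD fZ fM f1 [gD gZ gM g1]; split=> [u v | a u | u v |] /=.
- by rewrite gD fD.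
- by rewrite gZ fZ.
- by rewrite gM fM.
- by rewrite g1 f1.
Qed.

Section Involutions.
Variables (A : algType CC) (x xi y yi : A) (w wi : int -> int -> A).
Hypothesis pres : is_Cw_Laurent x xi y yi w wi.

Let rels := pres.1.
Let x_inv : inverse_pair xi x := rels.1.
Let y_inv : inverse_pair yi y := rels.2.1.

Lemma defines_involution_of_swap (x' xi' y' yi' : A) (w' wi' : int -> int -> A) :
  qrels x' xi' y' yi' w' wi' ->
  (forall f : A -> A, is_alg_hom f ->
     f x = x' -> f xi = xi' -> f y = y' -> f yi = yi' ->
     (forall s t, f (w s t) = w' s t) -> (forall s t, f (wi s t) = wi' s t) ->
     f x' = x /\ f xi' = xi /\ f y' = y /\ f yi' = yi /\
     (forall s t, f (w' s t) = w s t) /\ (forall s t, f (wi' s t) = wi s t)) ->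
  defines_involution x y w x' xi' y' yi' w' wi'.
Proof.
move=> rels' swap; split=> //.
have [_ univ] := pres.
have [[f [f_hom [fx [fxi [fy [fyi [fw fwi]]]]]]] _] := univ A _ _ _ _ _ _ rels'.
have [fx' [fxi' [fy' [fyi' [fw' fwi']]]]] := swap f f_hom fx fxi fy fyi fw fwi.
have ffK : forall a, f (f a) = a.
  have [_ uniq] := univ A _ _ _ _ _ _ rels.
  apply: (uniq (f \o f) id (alg_hom_comp f_hom f_hom) (@alg_hom_id A)) => [||||s t|s t] /=.
  - by rewrite fx fx'.
  - by rewrite fxi fxi'.
  - by rewrite fy fy'.
  - by rewrite fyi fyi'.
  - by rewrite fw fw'.
  - by rewrite fwi fwi'.
exists f; do !split=> //.
by exists f.
Qed.

Lemma swap_xy_involution :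
  defines_involution x y w y yi x xi (fun s t => wi t s) (fun s t => w t s).
Proof.
apply: defines_involution_of_swap (qrels_swap_xy rels) _ => f _ fx fxi fy fyi fw fwi.
by do !split=> //; move=> s t; rewrite /= ?fw ?fwi.
Qed.

Lemma inv_x_involution :
  defines_involution x y w xi x y yi (fun s t => wi (1 - s) t) (fun s t => w (1 - s) t).
Proof.
apply: defines_involution_of_swap (qrels_inv_x rels) _ => f _ fx fxi fy fyi fw fwi.
do !split=> //; move=> s t /=.
- by rewrite fwi; congr (w _ _); ring.
- by rewrite fw; congr (wi _ _); ring.
Qed.

Lemma inv_x_shear_involution :
  defines_involution x y w xi x (xi * y) (yi * x)
    (fun s t => wi (1 - s - t) t) (fun s t => w (1 - s - t) t).
Proof.
apply: defines_involution_of_swap (qrels_inv_x_shear rels) _.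
move=> f [_ _ fM _] fx fxi fy fyi fw fwi.
do !split=> //.
- by rewrite fM fxi fy mulrA x_inv.2 mul1r.
- by rewrite fM fyi fx -mulrA x_inv.2 mulr1.
- by move=> s t /=; rewrite fwi; congr (w _ _); ring.
- by move=> s t /=; rewrite fw; congr (wi _ _); ring.
Qed.

Lemma inv_y_involution :
  defines_involution x y w x xi yi y (fun s t => wi s (1 - t)) (fun s t => w s (1 - t)).
Proof.
apply: defines_involution_of_swap (qrels_inv_y rels) _ => f _ fx fxi fy fyi fw fwi.
do !split=> //; move=> s t /=.
- by rewrite fwi; congr (w _ _); ring.
- by rewrite fw; congr (wi _ _); ring.
Qed.

Lemma inv_xy_involution :
  defines_involution x y w xi x yi y
    (fun s t => w (1 - s) (1 - t)) (fun s t => wi (1 - s) (1 - t)).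
Proof.
apply: defines_involution_of_swap (qrels_inv_xy rels) _ => f _ fx fxi fy fyi fw fwi.
do !split=> //; move=> s t /=.
- by rewrite fw; congr (w _ _); ring.
- by rewrite fwi; congr (wi _ _); ring.
Qed.

Lemma inv_y_shear_involution :
  defines_involution x y w (yi * x) (xi * y) yi y
    (fun s t => wi s (1 - s - t)) (fun s t => w s (1 - s - t)).
Proof.
apply: defines_involution_of_swap (qrels_inv_y_shear rels) _.
move=> f [_ _ fM _] fx fxi fy fyi fw fwi.
do !split=> //.
- by rewrite fM fyi fx mulrA y_inv.2 mul1r.
- by rewrite fM fxi fy -mulrA y_inv.2 mulr1.
- by move=> s t /=; rewrite fwi; congr (w _ _); ring.
- by move=> s t /=; rewrite fw; congr (wi _ _); ring.
Qed.

End Involutions.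

Theorem lemma1 (A : algType CC) (x xi y yi : A) (w wi : int -> int -> A) :
  is_Cw_Laurent x xi y yi w wi ->
  (
   (* (1) x' = y, y' = x, w'(s,t) = w(t,s)^-1 *)
   defines_involution x y w y yi x xi
     (fun s t => wi t s) (fun s t => w t s) /\
   (* (2) x' = x^-1, y' = y, w'(s,t) = w(1-s,t)^-1 *)
   defines_involution x y w xi x y yi
     (fun s t => wi (1 - s) t) (fun s t => w (1 - s) t) /\
   (* (3) x' = x^-1, y' = x^-1 y, w'(s,t) = w(1-s-t,t)^-1 *)
   defines_involution x y w xi x (xi * y) (yi * x)
     (fun s t => wi (1 - s - t) t) (fun s t => w (1 - s - t) t) /\
   (* (4) x' = x, y' = y^-1, w'(s,t) = w(s,1-t)^-1 *)
   defines_involution x y w x xi yi y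
     (fun s t => wi s (1 - t)) (fun s t => w s (1 - t)) /\
   (* (5) x' = x^-1, y' = y^-1, w'(s,t) = w(1-s,1-t) *)
   defines_involution x y w xi x yi y
     (fun s t => w (1 - s) (1 - t)) (fun s t => wi (1 - s) (1 - t)) /\
   (* (6) x' = y^-1 x, y' = y^-1, w'(s,t) = w(s,1-s-t)^-1 *)
   defines_involution x y w (yi * x) (xi * y) yi y
     (fun s t => wi s (1 - s - t)) (fun s t => w s (1 - s - t))).
Proof.
move=> pres; split; first exact: swap_xy_involution.
split; first exact: inv_x_involution.
split; first exact: inv_x_shear_involution.
split; first exact: inv_y_involution.
split; first exact: inv_xy_involution.
exact: inv_y_shear_involution.
Qed.
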